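(* Let $\alpha\in(0,1)$, $\lambda\in(0,\tfrac12)$, and let $\Gamma^*$ be defined by the exponential formula $\Gamma^*=\sum_{j\ge0}\frac1{j!}\sum_{\mathbf n_1,\dots,\mathbf n_j}\pi^{(\mathbf n_1)}\cdots\pi^{(\mathbf n_j)}D^{(\mathbf n_1)}\cdots D^{(\mathbf n_j)}$ from a family $\{\pi^{(\mathbf n)}\}_{\mathbf n\in\mathbb N_0^{1+d}}\subset\mathsf T^*$ with $\pi^{(\mathbf n)}_\beta\ne0\Rightarrow|\beta|>|\mathbf n|$. Then for all multiindices $\beta,\gamma$ (not necessarily populated): (a) $(\Gamma^* )_\beta^\gamma$, as a function of the coefficients $\{\pi^{(\mathbf n)}_{\beta'}\}$, does not depend on $\pi^{(\mathbf n)}_{\beta'}$ unless $|\beta'|_\prec\le|\beta|_\prec$; (b) if $\sum_\ell\gamma(\ell)>0$, then $(\Gamma^* )_\beta^\gamma$ does not depend on $\pi^{(\mathbf n)}_{\beta'}$ unless $|\beta'|_\prec<|\beta|_\prec$; (c) $(\Gamma^*-\mathrm{id})_\beta^\gamma\ne0$ implies $|\gamma|_\prec<|\beta|_\prec$ and $|\gamma|<|\beta|$.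
   Context: Multiindices: finitely supported maps $\beta:\mathbb N_0\,\dot\cup\,\mathbb N_0\,\dot\cup\,(\mathbb N_0^{1+d}\setminus\{\mathbf0\})\to\mathbb N_0$ (elements $k$ of the first copy, $\ell$ of the second, $\mathbf n$ of the third). Monomials $\mathsf z^\beta=\prod_k\mathsf a_k^{\beta(k)}\prod_\ell\mathsf b_\ell^{\beta(\ell)}\prod_{\mathbf n\ne\mathbf0}\mathsf p_{\mathbf n}^{\beta(\mathbf n)}$ in the formal power series ring $\mathbb R[[\mathsf a_k,\mathsf b_\ell,\mathsf p_{\mathbf n}]]$; matrix coefficients $A\mathsf z^\gamma=\sum_\beta A_\beta^\gamma\mathsf z^\beta$. With $\mathfrak s=(4,1,\dots,1)$, $|\mathbf n|:=\sum_i\mathfrak s_i\mathbf n_i$; $[\beta]:=\sum_kk\beta(k)+\sum_\ell\ell\beta(\ell)-\sum_{\mathbf n\ne\mathbf0}\beta(\mathbf n)$, $|\beta|_p:=\sum_{\mathbf n\ne\mathbf0}|\mathbf n|\beta(\mathbf n)$, homogeneity $|\beta|:=\alpha(1+[\beta])+|\beta|_p$; weighted length $|\beta|_\prec:=\sum_k\beta(k)+\sum_\ell\beta(\ell)+\lambda\sum_{\mathbf n\ne\mathbf0}|\mathbf n|\beta(\mathbf n)$. $\beta$ is populated if $1+\sum_kk\beta(k)+\sum_\ell\ell\beta(\ell)=\sum_\ell\beta(\ell)+\sum_{\mathbf n\ne\mathbf0}\beta(\mathbf n)$ and ($\beta=g_{\mathbf n}$ for some $\mathbf n\neq\mathbf0$,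 or $\sum_\ell\beta(\ell)>0$); $\mathsf T^*:=\{\pi:\pi_\beta\ne0\Rightarrow\beta\text{ populated}\}$. Derivations: $D^{(\mathbf0)}:=\sum_k(k+1)\mathsf a_{k+1}\partial_{\mathsf a_k}+\sum_\ell(\ell+1)\mathsf b_{\ell+1}\partial_{\mathsf b_\ell}$, $D^{(\mathbf n)}:=\partial_{\mathsf p_{\mathbf n}}$ for $\mathbf n\ne\mathbf0$. (Under these assumptions all matrix coefficients of $\Gamma^*$ are finite sums.) *)

From HB Require Import structures.
From mathcomp Require Import all_boot all_order all_algebra.
From mathcomp Require Import finmap.
From mathcomp Require multiset.
From mathcomp Require Import boolp classical_sets fsbigop reals.

Set Implicit Arguments.
Unset Strict Implicit.
Unset Printing Implicit Defensive.
Import Order.TTheory GRing.Theory Num.Theory.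
Local Open Scope classical_set_scope.
Local Open Scope ring_scope.

Section Defs.
Variable (R : realType) (d : nat).

Definition ptup := (d.+1).-tuple nat.
Definition nzt (n : ptup) : bool := has (fun x => x != 0%N) n.

(* |n| = 4 n_0 + n_1 + ... + n_d  (scaling s = (4,1,...,1)) *)
Definition nnorm (n : ptup) : nat :=
  (\sum_(i < d.+1) (if i == ord0 then 4 else 1) * tnth n i)%N.

(* index set  N0 (a_k)  \dot\cup  N0 (b_l)  \dot\cup  (N0^{1+d} \ {0}) (p_n) *)
Definition idx := (nat + nat + {n : ptup | nzt n})%type.
Definition ia (k : nat) : idx := inl (inl k).
Definition ib (l : nat) : idx := inl (inr l).

(* multiindices: finitely supported maps idx -> N0 *)
Definition mi := multiset.multiset idx.
Definition evar (x : idx) : mi := multiset.msetn 1 x.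

Definition msumn (b : mi) (w : idx -> nat) : nat :=
  (\sum_(x <- finsupp b) b x * w x)%N.
Definition msum (b : mi) (w : idx -> R) : R :=
  \sum_(x <- finsupp b) (b x)%:R * w x.

Definition bracket (b : mi) : R :=
  msum b (fun x => match x with
                   | inl (inl k) => k%:R | inl (inr l) => l%:R | inr _ => -1 end).
Definition normp (b : mi) : R :=
  msum b (fun x => match x with inr n => (nnorm (val n))%:R | _ => 0 end).
Definition homog (alpha : R) (b : mi) : R := alpha * (1 + bracket b) + normp b.
Definition wlen (lambda : R) (b : mi) : R :=
  msum b (fun x => match x with inr n => lambda * (nnorm (val n))%:R | _ => 1 end).

Definition nb (b : mi) : nat :=
  msumn b (fun x => match x with inl (inr _) => 1%N | _ => 0%N end).

(* populated multiindices; g_n is the multiindex of the monomial p_n *)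
Definition populated (b : mi) : Prop :=
  (1 + msumn b (fun x => match x with inl (inl k) => k | inl (inr l) => l | _ => 0 end)
   = nb b + msumn b (fun x => match x with inr _ => 1 | _ => 0 end))%N
  /\ ((exists p : {n : ptup | nzt n}, b = evar (inr p)) \/ (0 < nb b)%N).

(* formal power series in R[[a_k, b_l, p_n]]: coefficient functions *)
Definition PS := mi -> R.

Definition Tstar (f : PS) : Prop := forall b, f b != 0 -> populated b.

Definition mono (g : mi) : PS := fun b => (b == g)%:R.
Definition ps1 : PS := mono (@multiset.mset0 idx).
Definition mulPS (f g : PS) : PS := fun b =>
  \sum_(q \in [set q : mi * mi | multiset.msetD q.1 q.2 = b]) f q.1 * g q.2.

Definition pder (x : idx) (f : PS) : PS := fun b =>
  ((b x).+1)%:R * f (multiset.msetD b (evar x)).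
Definition mulv (x : idx) (f : PS) : PS := fun b =>
  if (0 < b x)%N then f (multiset.msetB b (evar x)) else 0.

Definition D0 (f : PS) : PS := fun b =>
  \sum_(k \in [set: nat]) ((k.+1)%:R * mulv (ia k.+1) (pder (ia k) f) b)
  + \sum_(l \in [set: nat]) ((l.+1)%:R * mulv (ib l.+1) (pder (ib l) f) b).

Definition Dop (n : ptup) (f : PS) : PS :=
  match (insub n : option {m : ptup | nzt m}) with
  | Some p => pder (inr p) f
  | None => D0 f
  end.

Definition GammaStar (pi : ptup -> PS) (f : PS) : PS := fun b =>
  \sum_(j \in [set: nat]) ((factorial j)%:R^-1 *
     \sum_(ns \in [set: j.-tuple ptup])
        mulPS (foldr mulPS ps1 [seq pi n | n <- ns])
              (foldr Dop f ns) b).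

Definition GammaC (pi : ptup -> PS) (b g : mi) : R := GammaStar pi (mono g) b.

Definition admissible (alpha : R) (pi : ptup -> PS) : Prop :=
  forall n, Tstar (pi n) /\ (forall b, pi n b != 0 -> (nnorm n)%:R < homog alpha b).

End Defs.

(* The term of order [j >= 1] of Gamma^* maps z^gamma to monomials z^beta with
   beta = beta_1 + ... + beta_j + beta', where beta_i lies in the support of
   pi^(n_i) and z^beta' occurs in D^(n_1) ... D^(n_j) z^gamma.  Each D^(n) lowers
   the weighted length by lambda |n| and the homogeneity by |n| - alpha, and
   keeps sum_l gamma(l); each pi^(n) contributes more than lambda |n| to the
   weighted length and more than |n| - alpha to the homogeneity (for the
   weighted length because a populated beta has |beta| = alpha sum_l beta(l) +
   |beta|_p, whence lambda |beta| <= |beta|_prec as lambda alpha <= 1).  Adding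
   up gives (c).  For (a) and (b), every coefficient of pi involved is taken at
   a sub-multiindex of beta_1 + ... + beta_j, whose weighted length is at most
   that of beta, and strictly smaller when beta' <> 0, which sum_l gamma(l) > 0
   forces. *)
From HB Require Import structures.
From mathcomp Require Import all_boot all_order all_algebra.
From mathcomp Require Import finmap multiset.
From mathcomp Require Import boolp classical_sets fsbigop reals.
From mathcomp Require Import ring lra.
Import Order.TTheory GRing.Theory Num.Theory.
Local Open Scope ring_scope.
Local Open Scope mset_scope.

Set Implicit Arguments.
Unset Strict Implicit.

Lemma msubsetDl (K : choiceType) (A B : {mset K}) : A `<=` A `+` B.
Proof. by apply/msubsetP => x; rewrite msetE2 leq_addr. Qed.

Lemma fsbig_neq0 (R : realType) (I : choiceType) (A : set I) (F : I -> R) :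
  \sum_(i \in A) F i != 0 -> exists2 i, A i & F i != 0.
Proof.
apply: contraNP => noF; apply/eqP/fsbig1 => i Ai.
by apply: contra_notP noF => /eqP Fi; exists i.
Qed.

Section Multiindices.
Variable d : nat.
Implicit Types (b c : mi d) (x : idx d) (w : idx d -> nat).

Lemma perm_enum_msetD b c : perm_eq (enum_mset (b `+` c)) (enum_mset b ++ enum_mset c).
Proof.
by apply/allP => x _; apply/eqP; rewrite count_cat !count_mem_mset msetE2.
Qed.

Lemma msumnE b w : msumn b w = (\sum_(x <- enum_mset b) w x)%N.
Proof. by rewrite sum_mset; apply: eq_bigr => x _; rewrite mulnC. Qed.

Lemma msumnD b c w : msumn (b `+` c) w = (msumn b w + msumn c w)%N.
Proof. by rewrite !msumnE (perm_big _ (perm_enum_msetD b c)) big_cat. Qed.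

Lemma msumn_evar x w : msumn (evar x) w = w x.
Proof. by rewrite msumnE enum_msetn big_cons big_nil addn0. Qed.

Lemma nbD b c : nb (b `+` c) = (nb b + nb c)%N.
Proof. exact: msumnD. Qed.

Lemma nb0 : nb (@mset0 (idx d)) = 0%N.
Proof. by rewrite /nb msumnE enum_mset0 big_nil. Qed.

Lemma nnorm_gt0 (n : ptup d) : nzt n -> (0 < nnorm n)%N.
Proof.
case/hasP=> _ /tnthP[i ->] ni_neq0; rewrite /nnorm (bigD1 i) //= ltn_addr //.
by rewrite muln_gt0 (lt0n (tnth n i)) ni_neq0 andbT; case: (i == ord0).
Qed.

Lemma nnorm_eq0 (n : ptup d) : ~~ nzt n -> nnorm n = 0%N.
Proof.
move/hasPn=> n0; rewrite /nnorm big1 // => i _.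
by move: (n0 _ (mem_tnth i n)); rewrite negbK => /eqP ->; rewrite muln0.
Qed.

End Multiindices.

Section Weights.
Variables (R : realType) (d : nat).
Implicit Types (b c q : mi d) (x : idx d) (w : idx d -> R).

Lemma msumE b w : msum b w = \sum_(x <- enum_mset b) w x.
Proof.
rewrite /msum big_mset; apply: eq_bigr => x _.
by rewrite Monoid.iteropE iter_addr addr0 mulr_natl.
Qed.

Lemma msumD b c w : msum (b `+` c) w = msum b w + msum c w.
Proof. by rewrite !msumE (perm_big _ (perm_enum_msetD b c)) big_cat. Qed.

Lemma msum0 w : msum (@mset0 (idx d)) w = 0.
Proof. by rewrite msumE enum_mset0 big_nil. Qed.

Lemma msum_evar x w : msum (evar x) w = w x.
Proof. by rewrite msumE enum_msetn big_cons big_nil addr0. Qed.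

Lemma msum_ge0 b w : (forall x, 0 <= w x) -> 0 <= msum b w.
Proof. by move=> w_ge0; rewrite msumE sumr_ge0. Qed.

Lemma natr_msumn b (w : idx d -> nat) :
  (msumn b w)%:R = msum b (fun x => (w x)%:R : R).
Proof. by rewrite msumE msumnE natr_sum. Qed.

Variables (alpha lambda : R).

Lemma wlenD b c : wlen lambda (b `+` c) = wlen lambda b + wlen lambda c.
Proof. exact: msumD. Qed.

Lemma homogD b c : homog alpha (b `+` c) = homog alpha b + homog alpha c - alpha.
Proof. by rewrite /homog /bracket /normp !msumD; ring. Qed.

Lemma wlen0 : wlen lambda (@mset0 (idx d)) = 0.
Proof. exact: msum0. Qed.

Lemma homog0 : homog alpha (@mset0 (idx d)) = alpha.
Proof. by rewrite /homog /bracket /normp !msum0; ring. Qed.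

Lemma homog_populated b : populated b -> homog alpha b = alpha * (nb b)%:R + normp R b.
Proof.
case=> /(congr1 (fun m => m%:R : R)); rewrite !natrD !natr_msumn => pop _.
rewrite /homog; congr (alpha * _ + _).
rewrite -[RHS](addrK (msum b (fun x => (match x with inr _ => 1 | _ => 0 end)%:R))).
rewrite -pop -addrA; congr (_ + _).
by rewrite /bracket !msumE -sumrB; apply: eq_bigr => -[[k|l]|p] _; rewrite ?subr0 ?sub0r.
Qed.

Lemma wlen_ge_homog b : lambda * alpha <= 1 -> populated b ->
  lambda * homog alpha b <= wlen lambda b.
Proof.
move=> la_le1 /homog_populated ->; rewrite /nb natr_msumn /normp /wlen !msumE.
rewrite mulrDr mulrA mulr_sumr [X in _ + X]mulr_sumr -big_split /=.
by apply: ler_sum => -[[k|l]|p] _ /=; rewrite ?mulr0 ?addr0 ?mulr1 ?add0r.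
Qed.

Hypothesis lambda_gt0 : 0 < lambda.

Lemma wlen_ge0 b : 0 <= wlen lambda b.
Proof.
apply: msum_ge0 => -[[k|l]|[n nz_n]] //=.
exact: mulr_ge0 (ltW lambda_gt0) (ler0n _ _).
Qed.

Lemma wlen_msubset b c : b `<=` c -> wlen lambda b <= wlen lambda c.
Proof. by move/msetBDKC <-; rewrite wlenD lerDl wlen_ge0. Qed.

Lemma wlen_gt0 b : b != @mset0 _ -> 0 < wlen lambda b.
Proof.
case: (mset_0Vmem b) => [->|[x xb] _]; first by rewrite eqxx.
rewrite -(msetB1K xb) wlenD /wlen msum_evar ltr_pwDl ?wlen_ge0 //.
by case: x {xb} => [[k|l]|[n nz_n]] //=; rewrite mulr_gt0 // ltr0n nnorm_gt0.
Qed.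

Lemma wlen_gt0_nb b : (0 < nb b)%N -> 0 < wlen lambda b.
Proof.
by move=> nb_gt0; apply: wlen_gt0; apply: contraTneq nb_gt0 => ->; rewrite nb0.
Qed.

End Weights.

Section PowerSeries.
Variables (R : realType) (d : nat).
Implicit Types (f g : PS R d) (b c q : mi d) (pi : ptup d -> PS R d) (ns : seq (ptup d)).

Local Notation piprod pi ns := (foldr (@mulPS R d) (@ps1 R d) [seq pi n | n <- ns]).

Lemma mulPS_neq0 f g b : mulPS f g b != 0 ->
  exists q1 q2, [/\ q1 `+` q2 = b, f q1 != 0 & g q2 != 0].
Proof.
case/fsbig_neq0 => -[q1 q2] /= Eb; rewrite mulf_eq0 negb_or => /andP[fq1 gq2].
by exists q1, q2.
Qed.

Lemma mul1PS f b : mulPS (@ps1 R d) f b = f b.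
Proof.
rewrite /mulPS -(fsbig_widen [set (@mset0 (idx d), b)]); first last.
- move=> [q1 q2] [/= Eb nq]; rewrite /ps1 /mono.
  have [q10|] := eqVneq q1 (@mset0 _); last by rewrite mul0r.
  by case: nq; rewrite -Eb q10 mset0D.
- by move=> _ -> /=; rewrite mset0D.
by rewrite fsbig_set1 /ps1 /mono eqxx mul1r.
Qed.

Lemma GammaStar_zeroth pi f b :
  (forall ns, ns != [::] -> mulPS (piprod pi ns) (foldr (@Dop R d) f ns) b = 0) ->
  GammaStar pi f b = f b.
Proof.
move=> higher0; rewrite /GammaStar -(fsbig_widen [set 0%N]) //; last first.
  move=> j [_ /= /eqP j0]; rewrite fsbig1 ?mulr0 // => ns _.
  by apply: higher0; rewrite -size_eq0 size_tuple.
rewrite fsbig_set1 fact0 invr1 mul1r -(fsbig_widen [set [tuple]]) //; last first.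
  by move=> t [_ /= t0]; case: t0; rewrite (tuple0 t).
by rewrite fsbig_set1 mul1PS.
Qed.

Lemma piprod_local pi pi' ns q : (forall n a, a `<=` q -> pi' n a = pi n a) ->
  piprod pi' ns q = piprod pi ns q.
Proof.
elim: ns q => [//|n ns IH] q pi'E /=.
apply: eq_fsbigr => -[q1 q2]; rewrite inE /= => Eq.
have sub1 : q1 `<=` q by rewrite -Eq msubsetDl.
have sub2 : q2 `<=` q by rewrite -Eq msetDC msubsetDl.
rewrite pi'E // IH // => m a aq2; exact: pi'E (msubset_trans aq2 sub2).
Qed.

Lemma GammaStar_local pi pi' f b :
  (forall ns q1 q2, q1 `+` q2 = b -> foldr (@Dop R d) f ns q2 != 0 ->
     forall n a, a `<=` q1 -> pi' n a = pi n a) ->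
  GammaStar pi' f b = GammaStar pi f b.
Proof.
move=> pi'E; apply: eq_fsbigr => j _; congr (_ * _); apply: eq_fsbigr => ns _.
apply: eq_fsbigr => -[q1 q2]; rewrite inE /= => Eb.
have [->|Dq2] := eqVneq (foldr (@Dop R d) f ns q2) 0; first by rewrite !mulr0.
by rewrite (piprod_local _ (pi'E ns q1 q2 Eb Dq2)).
Qed.

Variables (alpha lambda : R).

Definition shifted_by (w h : R) q q' : Prop :=
  [/\ wlen lambda q' = wlen lambda q + w, homog alpha q' = homog alpha q + h
    & nb q' = nb q].

Lemma shifted_by0 q : shifted_by 0 0 q q.
Proof. by split; rewrite ?addr0. Qed.

Lemma shifted_by_trans w h w' h' q q' q'' :
  shifted_by w h q q' -> shifted_by w' h' q' q'' -> shifted_by (w + w') (h + h') q q''.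
Proof. by case=> w1 h1 n1 [w2 h2 n2]; split; rewrite ?w2 ?h2 ?n2 ?w1 ?h1 ?n1 ?addrA. Qed.

Lemma shifted_by_pder q (p : {n : ptup d | nzt n}) :
  shifted_by (lambda * (nnorm (val p))%:R) ((nnorm (val p))%:R - alpha)
             q (q `+` evar (inr p)).
Proof.
split; rewrite ?wlenD ?homogD ?nbD /wlen ?msum_evar //.
  by rewrite /homog /bracket /normp !msum_evar /=; ring.
by rewrite /nb msumn_evar addn0.
Qed.

(* [x'] is [a_{k+1}] or [b_{l+1}] and [x] is [a_k] or [b_l] respectively: the
   substitutions performed by D^(0). *)
Lemma shifted_by_raise r x x' :
  wlen lambda (evar x) = wlen lambda (evar x') ->
  homog alpha (evar x') = homog alpha (evar x) + alpha -> nb (evar x) = nb (evar x') ->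
  shifted_by 0 (- alpha) (evar x' `+` r) (r `+` evar x).
Proof.
by move=> wE hE nE; split; rewrite ?wlenD ?homogD ?nbD ?wE ?hE ?nE; ring.
Qed.

Lemma mulv_pder_neq0 x x' f q :
  wlen lambda (evar x) = wlen lambda (evar x') ->
  homog alpha (evar x') = homog alpha (evar x) + alpha -> nb (evar x) = nb (evar x') ->
  mulv x' (pder x f) q != 0 -> exists2 q', f q' != 0 & shifted_by 0 (- alpha) q q'.
Proof.
move=> wE hE nE; rewrite /mulv; case: ifP => [x'q|]; last by rewrite eqxx.
rewrite /pder mulf_eq0 negb_or => /andP[_ fq'].
exists ((q `\` evar x') `+` evar x) => //.
rewrite -[in X in shifted_by _ _ X](msetB1K (_ : x' \in q)) ?in_mset //.
exact: shifted_by_raise.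
Qed.

Lemma Dop_neq0 n f q : Dop n f q != 0 ->
  exists2 q', f q' != 0 & shifted_by (lambda * (nnorm n)%:R) ((nnorm n)%:R - alpha) q q'.
Proof.
rewrite /Dop; case: insubP => [p _ <-|/nnorm_eq0 ->].
  rewrite /pder mulf_eq0 negb_or => /andP[_ fq].
  by exists (q `+` evar (inr p)) => //; apply: shifted_by_pder.
rewrite mulr0 sub0r /D0; set Sa := (X in X + _); set Sb := (X in _ + X).
have [-> | /fsbig_neq0[k _ ak] _] := eqVneq Sa 0;
  [rewrite add0r => /fsbig_neq0[k _ ak] |];
  move: ak; rewrite mulf_eq0 negb_or => /andP[_]; apply: mulv_pder_neq0;
  by rewrite /wlen /homog /bracket /normp /nb ?msum_evar ?msumn_evar //=; ring.
Qed.

Lemma Dop_chain_neq0 ns f q : foldr (@Dop R d) f ns q != 0 ->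
  exists2 q', f q' != 0 & shifted_by (\sum_(n <- ns) lambda * (nnorm n)%:R)
                                     (\sum_(n <- ns) ((nnorm n)%:R - alpha)) q q'.
Proof.
elim: ns q => [|n ns IH] q /=.
  by rewrite !big_nil; exists q => //; apply: shifted_by0.
case/Dop_neq0 => q1 /IH[q2 fq2 sh12] sh1; exists q2 => //.
by rewrite !big_cons; apply: shifted_by_trans sh12.
Qed.

Lemma Dop_chain_mono ns c q : foldr (@Dop R d) (mono R c) ns q != 0 ->
  shifted_by (\sum_(n <- ns) lambda * (nnorm n)%:R)
             (\sum_(n <- ns) ((nnorm n)%:R - alpha)) q c.
Proof.
by case/Dop_chain_neq0 => q'; rewrite /mono pnatr_eq0 eqb0 negbK => /eqP ->.
Qed.

Hypotheses (lambda_gt0 : 0 < lambda) (lambda_alpha_le1 : lambda * alpha <= 1).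
Variables (pi : ptup d -> PS R d) (pi_adm : admissible alpha pi).

Lemma pi_coef_bound n b : pi n b != 0 ->
  lambda * (nnorm n)%:R < wlen lambda b /\ (nnorm n)%:R < homog alpha b.
Proof.
move=> pinb; have [/(_ b pinb) popb /(_ b pinb) hom] := pi_adm n; split=> //.
by apply: lt_le_trans (wlen_ge_homog lambda_alpha_le1 popb); rewrite ltr_pM2l.
Qed.

Lemma piprod_bound ns q : piprod pi ns q != 0 ->
  \sum_(n <- ns) lambda * (nnorm n)%:R <= wlen lambda q /\
  \sum_(n <- ns) ((nnorm n)%:R - alpha) <= homog alpha q - alpha.
Proof.
elim: ns q => [|n ns IH] q /=.
  rewrite /ps1 /mono pnatr_eq0 eqb0 negbK => /eqP ->.
  by rewrite !big_nil wlen0 homog0 subrr.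
case/mulPS_neq0 => q1 [q2 [<- /pi_coef_bound[w1 h1] /IH[w2 h2]]].
by rewrite !big_cons wlenD homogD; split; lra.
Qed.

Lemma piprod_bound_lt ns q : ns != [::] -> piprod pi ns q != 0 ->
  \sum_(n <- ns) lambda * (nnorm n)%:R < wlen lambda q /\
  \sum_(n <- ns) ((nnorm n)%:R - alpha) < homog alpha q - alpha.
Proof.
case: ns => [//|n ns] _ /=.
case/mulPS_neq0 => q1 [q2 [<- /pi_coef_bound[w1 h1] /piprod_bound[w2 h2]]].
by rewrite !big_cons wlenD homogD; split; lra.
Qed.

Lemma GammaStar_term_neq0 ns b c : ns != [::] ->
  mulPS (piprod pi ns) (foldr (@Dop R d) (mono R c) ns) b != 0 ->
  wlen lambda c < wlen lambda b /\ homog alpha c < homog alpha b.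
Proof.
move=> ns0 /mulPS_neq0[q1 [q2 [<- /(piprod_bound_lt ns0)[w1 h1]]]].
case/Dop_chain_mono=> w2 h2 _.
by rewrite wlenD homogD w2 h2; split; lra.
Qed.

Lemma GammaC_delta b c :
  ~ (wlen lambda c < wlen lambda b /\ homog alpha c < homog alpha b) ->
  GammaC pi b c = (b == c)%:R.
Proof.
move=> not_lt; rewrite /GammaC GammaStar_zeroth /mono // => ns ns0.
by apply/eqP; apply: contra_notT not_lt => /(GammaStar_term_neq0 ns0).
Qed.

End PowerSeries.

Unset Implicit Arguments.

Theorem mainTheorem5 (R : realType) (d : nat) (alpha lambda : R)
  (halpha : 0 < alpha < 1) (hlambda : 0 < lambda < 2^-1)
  (pi : ptup d -> PS R d) (hpi : admissible alpha pi) :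
  forall beta gamma : mi d,
  (* (a) *)
  (forall pi' : ptup d -> PS R d, admissible alpha pi' ->
     (forall n beta', wlen lambda beta' <= wlen lambda beta -> pi' n beta' = pi n beta') ->
     GammaC pi' beta gamma = GammaC pi beta gamma)
  /\
  (* (b) *)
  ((0 < nb gamma)%N ->
   forall pi' : ptup d -> PS R d, admissible alpha pi' ->
     (forall n beta', wlen lambda beta' < wlen lambda beta -> pi' n beta' = pi n beta') ->
     GammaC pi' beta gamma = GammaC pi beta gamma)
  /\
  (* (c) *)
  (GammaC pi beta gamma - (beta == gamma)%:R != 0 ->
     wlen lambda gamma < wlen lambda beta /\ homog alpha gamma < homog alpha beta).
Proof.
have [/andP[alpha_gt0 alpha_lt1] /andP[lambda_gt0 lambda_lt_half]] := (halpha, hlambda).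
have lambda_alpha_le1 : lambda * alpha <= 1 by nra.
move=> b c; split; [|split].
- move=> pi' _ pi'E; apply: GammaStar_local => ns q1 q2 Eb _ n a aq1; apply: pi'E.
  have := wlen_msubset lambda_gt0 aq1; have := wlen_ge0 lambda_gt0 q2.
  by rewrite -Eb wlenD; lra.
- move=> nb_c pi' _ pi'E; apply: GammaStar_local => ns q1 q2 Eb Dq2 n a aq1; apply: pi'E.
  have [_ _ nb_q2] := Dop_chain_mono alpha lambda Dq2; rewrite nb_q2 in nb_c.
  have := wlen_msubset lambda_gt0 aq1; have := wlen_gt0_nb lambda_gt0 nb_c.
  by rewrite -Eb wlenD; lra.
- apply: contraNP => not_lt.
  by rewrite (GammaC_delta lambda_gt0 lambda_alpha_le1 hpi not_lt) subrr.
Qed.
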